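(* Let $\mathcal{H}$ be a finite-dimensional Hilbert space and $\rho_1,\rho_2\in\mathcal{D}^\le(\mathcal{H})$. The following are equivalent: (1) $\rho_1=\rho_2$; (2) there exists an orthonormal basis $\mathcal{B}$ of $\mathcal{H}$ such that $\rho_1\,(=_\mathcal{B})^\#\,\rho_2$; (3) $\rho_1\,(=_{\mathit{sym}})^\#\,\rho_2$.
   Context: $\mathcal{D}^\le(\mathcal{H})$ is the set of partial density operators (positive, trace $\le 1$). For $\rho\in\mathcal{D}^\le(\mathcal{H}_1\otimes\mathcal{H}_2)$, $\rho$ is a coupling for $\langle\rho_1,\rho_2\rangle$ if $\mathrm{tr}_2(\rho)=\rho_1$ and $\mathrm{tr}_1(\rho)=\rho_2$ (partial traces over the second, resp. first, factor). The support $\mathrm{supp}(\rho)$ is the span of eigenvectors of $\rho$ with nonzero eigenvalues. For a closed subspace $\mathcal{X}$ of $\mathcal{H}_1\otimes\mathcal{H}_2$, we write $\rho_1\,\mathcal{X}^\#\,\rho_2$ (a lifting) if there exists a witness $\rho\in\mathcal{D}^\le(\mathcal{H}_1\otimes\mathcal{H}_2)$, i.e. a coupling $\rho$ for $\langle\rho_1,\rho_2\rangle$ with $\mathrm{supp}(\rho)\subseteq\mathcal{X}$. For an orthonormal basis $\mathcal{B}=\{|i\rangle\}$ of $\mathcal{H}$, $(=_\mathcal{B})$ is the subspace $\mathrm{span}\{|i\rangle|i\rangle\}$ of $\mathcal{H}\otimes\mathcal{H}$. $(=_{\mathit{sym}})$ is the symmetric subspace of $\mathcal{H}\otimes\mathcal{H}$,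 i.e. the range of the projection $\frac12(I\otimes I+S)$, where $S$ is the swap operator $S|\varphi,\psi\rangle=|\psi,\varphi\rangle$. *)

(* H = C^n (column vectors 'cV[C]_n) over a numClosedFieldType C
   (e.g. complex numbers); H (x) H = C^(n*n), the basis vector |i>|j> being
   indexed by mxvec_index i j (first factor i, second factor j). *)
From HB Require Import structures.
From mathcomp Require Import all_boot all_order all_algebra.
Set Implicit Arguments. Unset Strict Implicit. Unset Printing Implicit Defensive.
Import Order.TTheory GRing.Theory Num.Theory.
Local Open Scope ring_scope.

Section QDefs.
Variable C : numClosedFieldType.

Definition inner n (u v : 'cV[C]_n) : C := \sum_k (u k 0)^* * v k 0.

Definition psd n (A : 'M[C]_n) : Prop := forall x : 'cV[C]_n, 0 <= inner x (A *m x).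

Definition pdo n (A : 'M[C]_n) : Prop := psd A /\ \tr A <= 1.

Definition ptr2 m n (r : 'M[C]_(m * n)) : 'M[C]_m :=
  \matrix_(i, k) \sum_(j < n) r (mxvec_index i j) (mxvec_index k j).
Definition ptr1 m n (r : 'M[C]_(m * n)) : 'M[C]_n :=
  \matrix_(j, l) \sum_(i < m) r (mxvec_index i j) (mxvec_index i l).

Definition coupling m n (r : 'M[C]_(m * n)) (r1 : 'M[C]_m) (r2 : 'M[C]_n) : Prop :=
  ptr2 r = r1 /\ ptr1 r = r2.

(* subspaces of C^N are represented (mxalgebra style) by matrices whose row
   space is the subspace; a column vector v lies in X iff (v^T <= X)%MS. *)
Definition supp_sub N k (r : 'M[C]_N) (X : 'M[C]_(k, N)) : Prop :=
  forall (v : 'cV[C]_N) (lam : C), lam != 0 -> r *m v = lam *: v -> (v^T <= X)%MS.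

Definition lifting m n k (r1 : 'M[C]_m) (X : 'M[C]_(k, m * n)) (r2 : 'M[C]_n) : Prop :=
  exists r : 'M[C]_(m * n), pdo r /\ coupling r r1 r2 /\ supp_sub r X.

Definition ket2 m n (u : 'cV[C]_m) (v : 'cV[C]_n) : 'rV[C]_(m * n) := mxvec (u *m v^T).

Definition onb n (b : 'I_n -> 'cV[C]_n) : Prop :=
  forall i j, inner (b i) (b j) = (i == j)%:R.

Definition eqB n (b : 'I_n -> 'cV[C]_n) : 'M[C]_(n, n * n) :=
  \matrix_(i < n) ket2 (b i) (b i).

(* swap operator S|x,y> = |y,x>  (acting on row vectors: mxvec A |-> mxvec A^T) *)
Definition swap n : 'M[C]_(n * n) := lin_mx (@trmx C n n).

(* (=_sym) = range of (I + S)/2 *)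
Definition eqsym n : 'M[C]_(n * n) := 2^-1 *: (1%:M + swap n).
End QDefs.

From HB Require Import structures.
From mathcomp Require Import all_boot all_order all_algebra ring.
Set Implicit Arguments. Unset Strict Implicit. Unset Printing Implicit Defensive.
Import Order.TTheory GRing.Theory Num.Theory Num.Def.
Local Open Scope ring_scope.
Local Open Scope sesquilinear_scope.

(* A positive operator is hermitian, so it has a spectral decomposition
   [r = \sum_k d_k |w_k><w_k|] with [d_k >= 0] and orthonormal [w_k].
   (1) -> (2): for the basis B = {w_k}, the state [\sum_k d_k |w_k w_k><w_k w_k|]
   has both marginals equal to [r] and lives in (=_B).
   (2) -> (3): every [|w w>] is swap-invariant, so (=_B) lies in (=_sym).
   (3) -> (1): the eigenvectors of a witness supported in (=_sym) are
   swap-invariant, so its entries satisfy [r(ab, ce) = r(ba, ec)], and summing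
   over the traced-out index gives equal partial traces. *)

Section Lifting.
Variable C : numClosedFieldType.

Lemma inner_mx n (u v : 'cV[C]_n) : inner u v = (u^t* *m v) 0 0.
Proof. by rewrite /inner mxE; apply: eq_bigr => k _; rewrite !mxE. Qed.

Lemma innerZr n c (u v : 'cV[C]_n) : inner u (c *: v) = c * inner u v.
Proof. by rewrite !inner_mx -scalemxAr mxE. Qed.

Lemma inner_delta_mx n (A : 'M[C]_n) i j :
  inner (delta_mx i 0) (A *m delta_mx j 0) = A i j.
Proof.
rewrite -colE /inner (bigD1 i) //= big1 => [|k /negbTE k_i].
  by rewrite !mxE !eqxx conjC1 mul1r addr0.
by rewrite !mxE k_i conjC0 mul0r.
Qed.

Lemma inner_quad n (A : 'M[C]_n) c (u v : 'cV[C]_n) :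
  inner (u + c *: v) (A *m (u + c *: v)) =
  inner u (A *m u) + (c * inner u (A *m v) + c^* * inner v (A *m u))
  + c^* * c * inner v (A *m v).
Proof.
rewrite !inner_mx !(linearD, linearZ) /= map_mxD map_mxZ.
rewrite !(mulmxDl, mulmxDr) -!(scalemxAl, scalemxAr) !mxE /=; ring.
Qed.

Lemma conj_eq_of_sesqui_real (a b : C) :
  (forall c, c * a + c^* * b \is Num.real) -> b^* = a.
Proof.
move=> ab_real; have /CrealP re1 := ab_real 1; have /CrealP rei := ab_real 'i.
rewrite conjC1 !mul1r rmorphD /= in re1.
rewrite !(rmorphD, rmorphM) /= conjCK conjCi in rei.
have ii : 'i * 'i = -1 :> C by rewrite -expr2 sqrCi.
have im : a^* - b^* = b - a.
  have <- : 'i * (- 'i * a^* + 'i * b^*) = a^* - b^* by ring: ii.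
  by rewrite rei; ring: ii.
apply: (@mulfI _ 2); first by rewrite pnatr_eq0.
have -> : 2 * b^* = (a^* + b^*) - (a^* - b^*) by ring.
by rewrite re1 im; ring.
Qed.

(* Polarization: the quadratic form of [A] is real on every [e_i + c e_j]. *)
Lemma psd_conj_entry n (A : 'M[C]_n) : psd A -> forall i j, (A j i)^* = A i j.
Proof.
move=> A_psd i j; apply: conj_eq_of_sesqui_real => c.
set ei := delta_mx i 0 : 'cV[C]_n; set ej := delta_mx j 0 : 'cV[C]_n.
have q_real x : inner x (A *m x) \is Num.real by exact: ger0_real.
have -> : c * A i j + c^* * A j i =
    inner (ei + c *: ej) (A *m (ei + c *: ej)) - inner ei (A *m ei)
    - c^* * c * inner ej (A *m ej).
  by rewrite inner_quad !inner_delta_mx; ring.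
have cc_real : c^* * c \is Num.real by rewrite ger0_real // mulrC mul_conjC_ge0.
exact: realB (realB (q_real _) (q_real _)) (realM cc_real (q_real _)).
Qed.

Lemma psd_adjoint n (A : 'M[C]_n) : psd A -> A^t* = A.
Proof. by move=> A_psd; apply/matrixP => i j; rewrite !mxE psd_conj_entry. Qed.

(* [mixture W d] is [\sum_k d_k |w_k><w_k|], the [w_k] being the rows of [W]. *)
Definition mixture k N (W : 'M[C]_(k, N)) (d : 'rV[C]_k) : 'M[C]_N :=
  W^T *m diag_mx d *m map_mx conjC W.

Lemma mixtureE k N (W : 'M[C]_(k, N)) d x y :
  mixture W d x y = \sum_l W l x * d 0 l * (W l y)^*.
Proof. by rewrite !mxE; apply: eq_bigr => l _; rewrite mul_mx_diag !mxE. Qed.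

Lemma psd_mixture k N (W : 'M[C]_(k, N)) (d : 'rV[C]_k) :
  (forall l, 0 <= d 0 l) -> psd (mixture W d).
Proof.
move=> d_ge0 x; rewrite inner_mx /mixture !mulmxA.
set y := map_mx conjC W *m x.
have -> : x^t* *m W^T = y^t*.
  by rewrite /y trmx_mul map_mxM map_trmx map_mxCK.
rewrite -mulmxA mul_mx_diag mxE; apply: sumr_ge0 => l _; rewrite !mxE.
by rewrite mulrAC mulr_ge0 // mulrC mul_conjC_ge0.
Qed.

Lemma mixture_supp_sub k N (W : 'M[C]_(k, N)) d : supp_sub (mixture W d) W.
Proof.
move=> v lam lam_neq0 v_eigen.
have -> : v = lam^-1 *: (mixture W d *m v).
  by rewrite v_eigen scalerA mulVf // scale1r.
by rewrite linearZ /= scalemx_sub // /mixture !trmx_mul trmxK !mulmxA submxMl.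
Qed.

Lemma onb_unitary_rows n (W : 'M[C]_n) :
  W \is unitarymx -> onb (fun k => (row k W)^T).
Proof.
move=> /unitarymxP W_unitary i j.
have /matrixP /(_ j i) := W_unitary; rewrite !mxE eq_sym => <-.
by apply: eq_bigr => x _; rewrite !mxE mulrC.
Qed.

Lemma mixture_eigen n (W : 'M[C]_n) d k : W \is unitarymx ->
  mixture W d *m (row k W)^T = d 0 k *: (row k W)^T.
Proof.
move=> /unitarymxP W_unitary.
have Wk_dual : map_mx conjC W *m (row k W)^T = delta_mx k 0.
  by rewrite -[LHS]trmxK trmx_mul trmxK map_trmx -row_mul W_unitary row1 trmx_delta.
have diag_col : col k (diag_mx d) = d 0 k *: delta_mx k 0.
  apply/colP => x; rewrite !mxE eqxx andbT mulr_natr.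
  by case: eqP => [-> | _]; rewrite ?mulr0n.
by rewrite /mixture -!mulmxA Wk_dual -colE diag_col -scalemxAr -colE tr_row.
Qed.

Lemma psd_spectral n (A : 'M[C]_n) : psd A -> exists (W : 'M[C]_n) (d : 'rV[C]_n),
  [/\ W \is unitarymx, forall k, 0 <= d 0 k & A = mixture W d].
Proof.
move=> A_psd.
have /orthomx_spectralP A_diag : A \is normalmx.
  by apply/normalmxP; rewrite psd_adjoint.
set P := spectralmx A in A_diag; set d := spectral_diag A in A_diag.
have P_unitary : P \is unitarymx := spectral_unitarymx A.
have A_mix : A = mixture (map_mx conjC P) d.
  by rewrite /mixture map_mxCK map_trmx -invmx_unitary.
exists (map_mx conjC P), d; split => //; first by rewrite conjC_unitary.
move=> k; have := A_psd (row k (map_mx conjC P))^T.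
rewrite A_mix mixture_eigen ?conjC_unitary // innerZr.
by rewrite (onb_unitary_rows _ k k) ?conjC_unitary // eqxx mulr1.
Qed.

Lemma supp_sub_trans N k l (r : 'M[C]_N) (X : 'M[C]_(k, N)) (Y : 'M[C]_(l, N)) :
  supp_sub r X -> (X <= Y)%MS -> supp_sub r Y.
Proof.
by move=> r_X XY v lam lam_neq0 v_eigen; exact: submx_trans (r_X _ _ _ v_eigen) XY.
Qed.

Lemma sum_mxvec_index m n (F : 'I_(m * n) -> C) :
  \sum_x F x = \sum_(i < m) \sum_(j < n) F (mxvec_index i j).
Proof.
rewrite pair_big (reindex (uncurry (@mxvec_index m n))) /=.
  by apply: eq_bigr => -[i j].
have [g g_can g_inv] := curry_mxvec_bij m n.
by exists g => x _; [exact: g_can | exact: g_inv].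
Qed.

Lemma trace_ptr2 m n (r : 'M[C]_(m * n)) : \tr (ptr2 r) = \tr r.
Proof. by rewrite /mxtrace sum_mxvec_index; apply: eq_bigr => i _; rewrite mxE. Qed.

Section TensorSquare.
Variable n : nat.

Lemma swapE k (M : 'M[C]_(k, n * n)) i a b :
  (M *m swap C n) i (mxvec_index a b) = M i (mxvec_index b a).
Proof.
transitivity (row i (M *m swap C n) 0 (mxvec_index a b)); first by rewrite [RHS]mxE.
by rewrite row_mul -[row i M]vec_mxK mul_vec_lin !mxvecE !mxE.
Qed.

Lemma swap_invol : swap C n *m swap C n = 1%:M.
Proof.
apply/matrixP => i x; case/mxvec_indexP: x => a b.
by rewrite -[swap C n *m _]mul1mx mulmxA !swapE.
Qed.

Lemma ket2_swap (u v : 'cV[C]_n) : ket2 u v *m swap C n = ket2 v u.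
Proof. by rewrite /ket2 /swap mul_vec_lin /= trmx_mul trmxK. Qed.

Lemma sub_eqsymP k (U : 'M[C]_(k, n * n)) :
  reflect (U *m swap C n = U) (U <= eqsym C n)%MS.
Proof.
have eqsym_swap : eqsym C n *m swap C n = eqsym C n.
  by rewrite /eqsym -scalemxAl mulmxDl mul1mx swap_invol addrC.
apply: (iffP idP) => [/submxP [W ->] | U_swap]; first by rewrite -mulmxA eqsym_swap.
apply/submxP; exists U; rewrite /eqsym -scalemxAr mulmxDr mulmx1 U_swap.
by rewrite -mulr2n -scaler_nat scalerA mulVf ?pnatr_eq0 // scale1r.
Qed.

Lemma eqB_sub_eqsym (b : 'I_n -> 'cV[C]_n) : (eqB b <= eqsym C n)%MS.
Proof. by apply/sub_eqsymP/row_matrixP => k; rewrite row_mul rowK ket2_swap. Qed.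

Lemma psd_eqsym_ptr1 (r : 'M[C]_(n * n)) :
  psd r -> supp_sub r (eqsym C n) -> ptr1 r = ptr2 r.
Proof.
move=> r_psd r_sym; have [W [d [W_unitary _ r_mix]]] := psd_spectral r_psd.
have W_sym l a b : d 0 l != 0 -> W l (mxvec_index a b) = W l (mxvec_index b a).
  move=> dl_neq0.
  have Wl_eigen : r *m (row l W)^T = d 0 l *: (row l W)^T.
    by rewrite r_mix mixture_eigen.
  have := r_sym _ _ dl_neq0 Wl_eigen; rewrite trmxK.
  by move=> /sub_eqsymP /rowP /(_ (mxvec_index b a)); rewrite swapE !mxE.
have r_swap a b c e :
    r (mxvec_index a b) (mxvec_index c e) = r (mxvec_index b a) (mxvec_index e c).
  rewrite r_mix !mixtureE; apply: eq_bigr => l _.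
  have [-> | dl_neq0] := eqVneq (d 0 l) 0; first by rewrite !mulr0 !mul0r.
  by rewrite (W_sym l a b) // (W_sym l c e).
by apply/matrixP => a c; rewrite !mxE; apply: eq_bigr => j _; rewrite r_swap.
Qed.

Lemma ptr2_mixture_eqB (W : 'M[C]_n) d : W \is unitarymx ->
  ptr2 (mixture (eqB (fun k => (row k W)^T)) d) = mixture W d.
Proof.
move=> /onb_unitary_rows W_onb; apply/matrixP => a c.
have eqBE k x y : eqB (fun k => (row k W)^T) k (mxvec_index x y) = W k x * W k y.
  by rewrite mxE /ket2 mxvecE !mxE big_ord1 !mxE.
rewrite mixtureE mxE; under eq_bigr => j _ do rewrite mixtureE.
rewrite exchange_big; apply: eq_bigr => k _.
have norm1 : \sum_j (W k j)^* * W k j = 1.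
  have := W_onb k k; rewrite eqxx mulr1n /inner => <-.
  by apply: eq_bigr => j _; rewrite !mxE.
rewrite -[RHS]mulr1 -norm1 mulr_sumr; apply: eq_bigr => j _.
by rewrite (eqBE k a j) (eqBE k c j) rmorphM /=; ring.
Qed.

Lemma pdo_lifting_eqB (r : 'M[C]_n) :
  pdo r -> exists b : 'I_n -> 'cV[C]_n, onb b /\ lifting r (eqB b) r.
Proof.
move=> [r_psd r_tr]; have [W [d [W_unitary d_ge0 r_mix]]] := psd_spectral r_psd.
pose b k := (row k W)^T; pose R := mixture (eqB b) d.
have R_psd : psd R by exact: psd_mixture.
have R_supp : supp_sub R (eqB b) by exact: mixture_supp_sub.
have R_ptr2 : ptr2 R = r by rewrite r_mix; exact: ptr2_mixture_eqB.
have R_ptr1 : ptr1 R = r.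
  by rewrite psd_eqsym_ptr1 //; exact: supp_sub_trans R_supp (eqB_sub_eqsym b).
exists b; split; first exact: onb_unitary_rows.
exists R; split; first by split; rewrite // -trace_ptr2 R_ptr2.
by split.
Qed.

Lemma lifting_eqB_eqsym (b : 'I_n -> 'cV[C]_n) (r1 r2 : 'M[C]_n) :
  lifting r1 (eqB b) r2 -> lifting r1 (eqsym C n) r2.
Proof.
move=> [r [r_pdo [r_coupling r_supp]]]; exists r; split => //; split => //.
exact: supp_sub_trans r_supp (eqB_sub_eqsym b).
Qed.

Lemma lifting_eqsym_eq (r1 r2 : 'M[C]_n) : lifting r1 (eqsym C n) r2 -> r1 = r2.
Proof. by move=> [r [[r_psd _] [[<- <-] r_sym]]]; rewrite psd_eqsym_ptr1. Qed.

End TensorSquare.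
End Lifting.

Theorem proposition3p8 (C : numClosedFieldType) (n : nat) (r1 r2 : 'M[C]_n) :
  pdo r1 -> pdo r2 ->
  [<-> r1 = r2;
       exists b : 'I_n -> 'cV[C]_n, onb b /\ lifting r1 (eqB b) r2;
       lifting r1 (eqsym C n) r2].
Proof.
move=> r1_pdo _; tfae.
- by move=> <-; exact: pdo_lifting_eqB.
- by move=> [b [_ r_lift]]; exact: lifting_eqB_eqsym r_lift.
- exact: lifting_eqsym_eq.
Qed.
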